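(* Let $\mathcal T$ be an atomic orbital category. The restricted map $\nabla_u:\mathrm{wIndSys}^{uni}_{\mathcal T}\to\mathrm{Fam}_{\mathcal T}$ has a fully faithful left adjoint given by $\mathcal F\mapsto\underline{\mathbb F}^0_{\mathcal T}\cup E^{\mathcal T}_{\mathcal F}\underline{\mathbb F}^\infty_{\mathcal F}$ and a fully faithful right adjoint; hence it is a cocartesian fibration, with cocartesian transport along $\mathcal F\le\mathcal F'$ given by $\mathcal C\mapsto\mathcal C\vee E^{\mathcal T}_{\mathcal F'}\underline{\mathbb F}^\infty_{\mathcal F'}$.
   Context: For a small category $\mathcal T$, $\mathbb F_{\mathcal T}$ is the full subcategory of $\mathrm{Fun}(\mathcal T^{op},\mathrm{Set})$ on finite coproducts of representables; $\mathcal T$ is orbital if $\mathbb F_{\mathcal T}$ has pullbacks, and atomic if every morphism of $\mathcal T$ admitting a section is an isomorphism. $\mathbb F_V:=\mathbb F_{\mathcal T,/V}$, $*_V$ terminal, $\emptyset_V$ initial, $n\cdot S$ the $n$-fold coproduct; for $U\to V$, $\mathrm{Res}^V_U$ is pullback and $\mathrm{Ind}^V_U$ postcomposition. A full $\mathcal T$-subcategory assigns isomorphism-closed classes $\mathcal C_V\subseteq\mathrm{Ob}\,\mathbb F_V$ stable under restriction. For $S\in\mathbb F_V$ with orbits $U$ and $T_U\in\mathbb F_U$, $\coprod_U^ST_U:=\coprod_U\mathrm{Ind}_U^VT_U$. A $\mathcal T$-weak indexing system is a full $\mathcal T$-subcategory with $\mathcal C_V\neq\emptyset\Rightarrow *_V\in\mathcal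 C_V$ and closed under $\coprod^S_UT_U$ for $S\in\mathcal C_V$, $T_U\in\mathcal C_U$; these form a lattice under inclusion (join $\vee$). It is unital if every $\mathcal C_V$ is nonempty and $S\sqcup S'\in\mathcal C_V\Rightarrow S,S'\in\mathcal C_V$; $\mathrm{wIndSys}^{uni}_{\mathcal T}$ is the poset of these. A $\mathcal T$-family is a full subcategory $\mathcal F$ with $V\to W$, $W\in\mathcal F\Rightarrow V\in\mathcal F$; $\mathrm{Fam}_{\mathcal T}$ their poset. $\nabla_u(\mathcal C)=\{V\mid 2\cdot *_V\in\mathcal C_V\}$. $\underline{\mathbb F}^0_{\mathcal T}$ has $V$-values $\{\emptyset_V,*_V\}$; $E^{\mathcal T}_{\mathcal F}\underline{\mathbb F}^\infty_{\mathcal F}$ has $V$-values $\{n\cdot *_V\mid n\in\mathbb N\}$ for $V\in\mathcal F$ and $\emptyset$ otherwise. Adjoints of monotone maps: $L\dashv\pi$ iff $L(x)\le y\iff x\le\pi(y)$; fully faithful means order-reflecting. A monotone $\pi:P\to Q$ is a cocartesian fibration if for all $q\le q'$ and $x\in\pi^{-1}(q)$ there is $t_q^{q'}x\in\pi^{-1}(q')$ with: for all $y$ with $q'\le\pi(y)$, $x\le y\iff t_q^{q'}x\le y$ ($t_q^{q'}$ is cocartesian transport). *)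

From mathcomp Require Import all_boot.
Unset Implicit Arguments.
Unset Strict Implicit.
Unset Printing Implicit Defensive.

Record Cat := {
  Ob : Type;
  Hom : Ob -> Ob -> Type;
  cid : forall a, Hom a a;
  ccomp : forall {a b c}, Hom b c -> Hom a b -> Hom a c;
  ccomp_id_l : forall a b (f : Hom a b), ccomp (cid b) f = f;
  ccomp_id_r : forall a b (f : Hom a b), ccomp f (cid a) = f;
  ccomp_assoc : forall a b c d (h : Hom c d) (g : Hom b c) (f : Hom a b),
      ccomp h (ccomp g f) = ccomp (ccomp h g) f }.
Arguments Hom {_} _ _.
Arguments cid {_} _.
Arguments ccomp {_ _ _ _} _ _.

Section FT.
Variable T : Cat.

(* ---------- the category F_T of finite coproducts of representables ----------
   An object is a finite coproduct  \coprod_{i in I} y(a_i)  (I a finite type);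
   by the Yoneda lemma a map  \coprod_i y(a_i) -> \coprod_j y(b_j)  is, for each
   i, a choice of j together with a morphism a_i -> b_j in T. *)
Record FObj := { fidx : finType; fob : fidx -> Ob T }.
Arguments fob : clear implicits.
Definition FHom (A B : FObj) :=
  forall i : fidx A, {j : fidx B & Hom (fob A i) (fob B j)}.
Definition fid (A : FObj) : FHom A A := fun i => existT _ i (cid (fob A i)).
Arguments fid : clear implicits.
Definition fcomp {A B C : FObj} (g : FHom B C) (f : FHom A B) : FHom A C :=
  fun i => let: existT j h := f i in
           let: existT k h' := g j in existT _ k (ccomp h' h).

Definition is_pullback {A B C : FObj} (f : FHom A C) (g : FHom B C)
  {P : FObj} (p1 : FHom P A) (p2 : FHom P B) : Prop :=
  fcomp f p1 = fcomp g p2 /\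
  forall (Q : FObj) (q1 : FHom Q A) (q2 : FHom Q B), fcomp f q1 = fcomp g q2 ->
    exists! u : FHom Q P, fcomp p1 u = q1 /\ fcomp p2 u = q2.

Definition rep (V : Ob T) : FObj := {| fidx := unit; fob := fun _ => V |}.
Definition repmap {U V : Ob T} (f : Hom U V) : FHom (rep U) (rep V) :=
  fun _ => existT _ tt f.

Record FV (V : Ob T) := { fvobj : FObj; fvmap : FHom fvobj (rep V) }.
Arguments fvobj {V} _.
Arguments fvmap {V} _ _.

Definition fv_iso {V : Ob T} (S S' : FV V) : Prop :=
  exists (phi : FHom (fvobj S) (fvobj S')) (psi : FHom (fvobj S') (fvobj S)),
    [/\ fcomp psi phi = fid (fvobj S), fcomp phi psi = fid (fvobj S')
      & fcomp (fvmap S') phi = fvmap S].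

Definition starV (V : Ob T) : FV V := {| fvobj := rep V; fvmap := fid (rep V) |}.
Definition nstarObj (n : nat) (V : Ob T) : FObj :=
  {| fidx := 'I_n; fob := fun _ => V |}.
Definition nstarV (n : nat) (V : Ob T) : FV V :=
  {| fvobj := nstarObj n V;
     fvmap := (fun _ => existT _ tt (cid V)) : FHom (nstarObj n V) (rep V) |}.
Definition emptyObj (V : Ob T) : FObj := {| fidx := void; fob := fun _ => V |}.
Definition emptyV (V : Ob T) : FV V :=
  {| fvobj := emptyObj V;
     fvmap := (fun x => match x with end) : FHom (emptyObj V) (rep V) |}.

Definition indV {U V : Ob T} (f : Hom U V) (S : FV U) : FV V :=
  {| fvobj := fvobj S; fvmap := fcomp (repmap f) (fvmap S) |}.

Definition orb {V : Ob T} (S : FV V) (i : fidx (fvobj S)) : Ob T := fob (fvobj S) i.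
Definition orbmap {V : Ob T} (S : FV V) (i : fidx (fvobj S)) : Hom (orb S i) V :=
  projT2 (fvmap S i).

(* \coprod^S_U T_U := \coprod_U Ind_U^V T_U *)
Definition coprodObj {V : Ob T} {S : FV V} (T_ : forall i, FV (orb S i)) : FObj :=
  {| fidx := {i : fidx (fvobj S) & fidx (fvobj (T_ i))};
     fob := fun x => fob (fvobj (T_ (tag x))) (tagged x) |}.
Definition coprodV {V : Ob T} {S : FV V} (T_ : forall i, FV (orb S i)) : FV V :=
  {| fvobj := coprodObj T_;
     fvmap := (fun x => fvmap (indV (orbmap S (tag x)) (T_ (tag x))) (tagged x))
               : FHom (coprodObj T_) (rep V) |}.

Definition sumObj (A B : FObj) : FObj :=
  {| fidx := (fidx A + fidx B)%type;
     fob := fun x => match x with inl i => fob A i | inr j => fob B j end |}.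
Definition sumV {V : Ob T} (S S' : FV V) : FV V :=
  {| fvobj := sumObj (fvobj S) (fvobj S');
     fvmap := (fun x => match x as x0 return {j : unit & Hom (fob (sumObj _ _) x0) V} with
                        | inl i => fvmap S i | inr j => fvmap S' j end)
              : FHom (sumObj (fvobj S) (fvobj S')) (rep V) |}.

Definition Cls := forall V : Ob T, FV V -> Prop.

Definition cls_le (C D : Cls) : Prop := forall V (S : FV V), C V S -> D V S.

Definition full_Tsubcat (C : Cls) : Prop :=
  (forall V (S S' : FV V), fv_iso S S' -> C V S -> C V S') /\
  (* Res^V_U S (any pullback of S -> V along U -> V) lies in C_U *)
  (forall (U V : Ob T) (f : Hom U V) (S : FV V) (P : FObj)
          (q : FHom P (rep U)) (r : FHom P (fvobj S)),
      is_pullback (fvmap S) (repmap f) r q -> C V S -> C U {| fvobj := P; fvmap := q |}).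

Definition weak_indexing_system (C : Cls) : Prop :=
  [/\ full_Tsubcat C,
      (forall V, (exists S : FV V, C V S) -> C V (starV V))
    & (forall V (S : FV V) (T_ : forall i, FV (orb S i)),
         C V S -> (forall i, C (orb S i) (T_ i)) -> C V (coprodV T_))].

Definition unital_wis (C : Cls) : Prop :=
  [/\ weak_indexing_system C,
      (forall V, exists S : FV V, C V S)
    & (forall V (S S' : FV V), C V (sumV S S') -> C V S /\ C V S')].

Definition wis_join (C D : Cls) : Cls := fun V S =>
  forall W : Cls, weak_indexing_system W -> cls_le C W -> cls_le D W -> W V S.

Definition is_family (F : Ob T -> Prop) : Prop :=
  forall V W : Ob T, Hom V W -> F W -> F V.
Definition fam_le (F G : Ob T -> Prop) : Prop := forall V, F V -> G V.

Definition nabla_u (C : Cls) : Ob T -> Prop := fun V => C V (nstarV 2 V).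

(* F^0_T and E^T_F F^infty_F, as isomorphism-closed classes *)
Definition F0 : Cls := fun V S => fv_iso S (emptyV V) \/ fv_iso S (starV V).
Definition EFinf (F : Ob T -> Prop) : Cls :=
  fun V S => F V /\ exists n : nat, fv_iso S (nstarV n V).
Definition cls_union (C D : Cls) : Cls := fun V S => C V S \/ D V S.

End FT.

Arguments FHom {T} _ _.
Arguments fid {T} _.
Arguments fcomp {T A B C} _ _.
Arguments is_pullback {T A B C} _ _ {P} _ _.
Arguments cls_le {T} _ _.
Arguments full_Tsubcat {T} _.
Arguments weak_indexing_system {T} _.
Arguments unital_wis {T} _.
Arguments wis_join {T} _ _ _ _.
Arguments is_family {T} _.
Arguments fam_le {T} _ _.
Arguments nabla_u {T} _ _.
Arguments EFinf {T} _ _ _.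
Arguments cls_union {T} _ _ _ _.

Definition orbital (T : Cat) : Prop :=
  forall (A B C : FObj T) (f : FHom A C) (g : FHom B C),
    exists (P : FObj T) (p1 : FHom P A) (p2 : FHom P B), is_pullback f g p1 p2.

Definition atomic (T : Cat) : Prop :=
  forall (a b : Ob T) (f : Hom a b),
    (exists s : Hom b a, ccomp f s = cid b) ->
    exists g : Hom b a, ccomp g f = cid a /\ ccomp f g = cid b.

(* Call S in F_V isotrivial when every orbit maps isomorphically to V, i.e.
   S = n.*_V.  A unital weak indexing system C contains *_V and is closed
   under summands, so it contains emptyset_V; once it contains 2.*_V it
   contains every n.*_V (split off one point and use closure under
   coproducts over 2.*_V).  Hence the smallest unital system whose nabla_u
   contains F consists of the isotrivial S with |S| <= 1 or V in F, which is
   F^0 u E_F F^infty_F.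

   The right adjoint R(F) takes, over V, those S such that any W -> V with two
   different lifts to S has W in F.  If C is unital, S is in C_V and W -> V
   has two different lifts, then these are two different sections of the
   pullback of S to W; by atomicity the corresponding orbits map
   isomorphically to W, so 2.*_W is a summand of Res S, lies in C_W, and W is
   in nabla_u C.

   For the transport, the join C v E_F' F^infty_F' is the closure of
   C u L(F') under isomorphisms and the coproducts coprod^S_U T_U.  It is
   unital because pullbacks and summands of such coproducts are again such
   coproducts; its nabla_u is F', since it lies below R(F'). *)

From mathcomp Require Import all_boot.
From Stdlib Require Import Eqdep Classical ClassicalEpsilon.
From Stdlib Require Import FunctionalExtensionality PropExtensionality.

Set Implicit Arguments.

Local Arguments fidx {T} _.
Local Arguments fob {T} _ _.
Local Arguments rep {T} V.
Local Arguments repmap {T U V} f _.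
Local Arguments fvobj {T V} _.
Local Arguments fvmap {T V} _ _.
Local Arguments fv_iso {T V} S S'.
Local Arguments starV {T} V.
Local Arguments nstarV {T} n V.
Local Arguments emptyV {T} V.
Local Arguments orb {T V} S i.
Local Arguments orbmap {T V} S i.
Local Arguments coprodV {T V S} T_.
Local Arguments sumV {T V} S S'.

Section Basics.
Variable T : Cat.

Lemma ccompA {a b c d : Ob T} (h : Hom c d) (g : Hom b c) (f : Hom a b) :
  ccomp h (ccomp g f) = ccomp (ccomp h g) f.
Proof. exact: ccomp_assoc. Qed.

Lemma ccomp_idl {a b : Ob T} (f : Hom a b) : ccomp (cid b) f = f.
Proof. exact: ccomp_id_l. Qed.

Lemma ccomp_idr {a b : Ob T} (f : Hom a b) : ccomp f (cid a) = f.
Proof. exact: ccomp_id_r. Qed.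

Definition is_iso {a b : Ob T} (h : Hom a b) :=
  exists g : Hom b a, ccomp g h = cid a /\ ccomp h g = cid b.

Definition iso_inv {a b : Ob T} {h : Hom a b} (H : is_iso h) : Hom b a :=
  proj1_sig (constructive_indefinite_description _ H).

Lemma iso_invL {a b : Ob T} {h : Hom a b} (H : is_iso h) : ccomp (iso_inv H) h = cid a.
Proof. by rewrite /iso_inv; case: constructive_indefinite_description => g []. Qed.

Lemma iso_invR {a b : Ob T} {h : Hom a b} (H : is_iso h) : ccomp h (iso_inv H) = cid b.
Proof. by rewrite /iso_inv; case: constructive_indefinite_description => g []. Qed.

Lemma is_iso_id (a : Ob T) : is_iso (cid a).
Proof. by exists (cid a); rewrite ccomp_idl. Qed.

Lemma is_iso_comp {a b c : Ob T} (g : Hom b c) (h : Hom a b) :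
  is_iso g -> is_iso h -> is_iso (ccomp g h).
Proof.
case=> g' [G1 G2] [h' [H1 H2]]; exists (ccomp h' g'); split.
- by rewrite -ccompA (ccompA g') G1 ccomp_idl.
- by rewrite -ccompA (ccompA h) H2 ccomp_idl.
Qed.

Lemma is_iso_inv {a b : Ob T} {h : Hom a b} (H : is_iso h) : is_iso (iso_inv H).
Proof. by exists h; rewrite iso_invL iso_invR. Qed.

Lemma iso_cancel {a b c : Ob T} {e : Hom b c} {h1 h2 : Hom a b} :
  is_iso e -> ccomp e h1 = ccomp e h2 -> h1 = h2.
Proof. by case=> g [G1 _] E; rewrite -(ccomp_idl h1) -(ccomp_idl h2) -G1 -!ccompA E. Qed.

Lemma fhom_ext {A B : FObj T} (f g : FHom A B) : (forall i, f i = g i) -> f = g.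
Proof. exact: functional_extensionality_dep. Qed.

Lemma fhom_rep_ext {X : Ob T} {B : FObj T} (f g : FHom (rep X) B) : f tt = g tt -> f = g.
Proof. by move=> E; apply: fhom_ext => -[]. Qed.

Lemma fcompE {A B C : FObj T} (g : FHom B C) (f : FHom A B) i :
  fcomp g f i = existT _ (projT1 (g (projT1 (f i))))
                         (ccomp (projT2 (g (projT1 (f i)))) (projT2 (f i))).
Proof. by rewrite /fcomp; case: (f i) => j h /=; case: (g j). Qed.

Lemma fcompA {A B C D : FObj T} (h : FHom C D) (g : FHom B C) (f : FHom A B) :
  fcomp h (fcomp g f) = fcomp (fcomp h g) f.
Proof. by apply: fhom_ext => i; rewrite !fcompE /= ccompA. Qed.

Lemma fcomp_idl {A B : FObj T} (f : FHom A B) : fcomp (fid B) f = f.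
Proof. by apply: fhom_ext => i; rewrite fcompE /= ccomp_idl; case: (f i). Qed.

Lemma fcomp_idr {A B : FObj T} (f : FHom A B) : fcomp f (fid A) = f.
Proof. by apply: fhom_ext => i; rewrite fcompE /= ccomp_idr; case: (f i). Qed.

Lemma repmap_comp {U V W : Ob T} (g : Hom V W) (f : Hom U V) :
  fcomp (repmap g) (repmap f) = repmap (ccomp g f).
Proof. by apply: fhom_ext => -[]. Qed.

Lemma fvmapE {V : Ob T} (S : FV T V) i : fvmap S i = existT _ tt (orbmap S i).
Proof. by rewrite /orbmap; case: (fvmap S i) => -[]. Qed.

Lemma fhom_to_rep_ext {V : Ob T} (A : FObj T) (f g : FHom A (rep V)) :
  (forall i, projT2 (f i) = projT2 (g i)) -> f = g.
Proof.
move=> E; apply: fhom_ext => i; move: (E i).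
by case: (f i) => -[] x; case: (g i) => -[] y /= ->.
Qed.

Lemma existT_unit_eq {X Y : Ob T} (a b : unit) (x y : Hom X Y) :
  existT (fun _ : unit => Hom X Y) a x = existT (fun _ => Hom X Y) b y <-> x = y.
Proof. by case: a; case: b; split=> [E|->]; first exact: inj_pair2 E. Qed.

End Basics.

Arguments is_iso {T a b} h.
Arguments iso_inv {T a b h} H.

Section Pullbacks.
Variable T : Cat.

Lemma fv_iso_refl {V : Ob T} (S : FV T V) : fv_iso S S.
Proof. by exists (fid _), (fid _); rewrite !fcomp_idl fcomp_idr. Qed.

Lemma fv_iso_over {V : Ob T} {S S' : FV T V} phi psi :
  fcomp phi psi = fid (fvobj S') -> fcomp (fvmap S') phi = fvmap S ->
  fcomp (fvmap S) psi = fvmap S'.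
Proof. by move=> H2 H3; rewrite -H3 -fcompA H2 fcomp_idr. Qed.

Lemma fv_iso_sym {V : Ob T} (S S' : FV T V) : fv_iso S S' -> fv_iso S' S.
Proof. by case=> phi [psi [H1 H2 H3]]; exists psi, phi; split; last exact: fv_iso_over H3. Qed.

Lemma pullback_monic {A B C P Q : FObj T} {f : FHom A C} {g : FHom B C}
    {p1 : FHom P A} {p2 : FHom P B} (u u' : FHom Q P) :
  is_pullback f g p1 p2 -> fcomp p1 u = fcomp p1 u' -> fcomp p2 u = fcomp p2 u' -> u = u'.
Proof.
case=> Hc H E1 E2.
have Hu : fcomp f (fcomp p1 u) = fcomp g (fcomp p2 u) by rewrite !fcompA Hc.
by case: (H _ _ _ Hu) => w [_ Hw]; rewrite -(Hw u) //; apply: Hw.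
Qed.

Lemma is_pullback_rep {A B C P : FObj T} (f : FHom A C) (g : FHom B C)
    (p1 : FHom P A) (p2 : FHom P B) :
  fcomp f p1 = fcomp g p2 ->
  (forall X (x1 : FHom (rep X) A) (x2 : FHom (rep X) B), fcomp f x1 = fcomp g x2 ->
     exists u : FHom (rep X) P, fcomp p1 u = x1 /\ fcomp p2 u = x2) ->
  (forall X (u u' : FHom (rep X) P), fcomp p1 u = fcomp p1 u' -> fcomp p2 u = fcomp p2 u' ->
     u = u') ->
  is_pullback f g p1 p2.
Proof.
move=> Hc Hex Huniq; split=> // Q q1 q2 Hq.
pose at_orb Y (h : FHom Q Y) k : FHom (rep (fob Q k)) Y := fun _ => h k.
have at_orbC Y Y' (g' : FHom Y Y') h k : fcomp g' (at_orb Y h k) = at_orb Y' (fcomp g' h) k.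
  exact: fhom_rep_ext.
have Hk k : fcomp f (at_orb _ q1 k) = fcomp g (at_orb _ q2 k) by rewrite !at_orbC Hq.
pose u k := projT1 (constructive_indefinite_description _ (Hex _ _ _ (Hk k))).
have Hu k : fcomp p1 (u k) = at_orb _ q1 k /\ fcomp p2 (u k) = at_orb _ q2 k.
  by rewrite /u; case: constructive_indefinite_description.
exists (fun k => u k tt); split.
  split; apply: fhom_ext => k; have [E1 E2] := Hu k.
    exact: (f_equal (fun F => F tt) E1).
  exact: (f_equal (fun F => F tt) E2).
move=> u' [E1 E2]; apply: fhom_ext => k.
suff -> : u k = at_orb _ u' k by [].
by case: (Hu k) => F1 F2; apply: Huniq; rewrite ?F1 ?F2 !at_orbC ?E1 ?E2.
Qed.

Lemma pullback_fv_iso {V W : Ob T} (S : FV T V) (f : Hom W V) {P P' : FObj T}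
    (r : FHom P (fvobj S)) (q : FHom P (rep W)) (r' : FHom P' (fvobj S)) (q' : FHom P' (rep W)) :
  is_pullback (fvmap S) (repmap f) r q -> is_pullback (fvmap S) (repmap f) r' q' ->
  fv_iso {| fvobj := P; fvmap := q |} {| fvobj := P'; fvmap := q' |}.
Proof.
move=> Hpb Hpb'; case: (Hpb) => Hc H; case: (Hpb') => Hc' H'.
case: (H' _ _ _ Hc) => u [[U1 U2] _]; case: (H _ _ _ Hc') => v [[V1 V2] _].
exists u, v; split=> //.
- by apply: (pullback_monic Hpb); rewrite fcomp_idr fcompA ?V1 ?V2.
- by apply: (pullback_monic Hpb'); rewrite fcomp_idr fcompA ?U1 ?U2.
Qed.

Lemma pullback_along_iso {V W : Ob T} (S S' : FV T V) (f : Hom W V) {P : FObj T}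
    (r : FHom P (fvobj S)) (q : FHom P (rep W)) :
  fv_iso S' S -> is_pullback (fvmap S) (repmap f) r q ->
  exists r' : FHom P (fvobj S'), is_pullback (fvmap S') (repmap f) r' q.
Proof.
case=> phi [psi [H1 H2 H3]] [Hc H]; have H4 := fv_iso_over H2 H3.
exists (fcomp psi r); split; first by rewrite fcompA H4.
move=> Q q1 q2 Hq.
have Hq' : fcomp (fvmap S) (fcomp phi q1) = fcomp (repmap f) q2 by rewrite fcompA H3.
case: (H _ _ _ Hq') => u [[U1 U2] Hu]; exists u; split.
  by rewrite -fcompA U1 fcompA H1 fcomp_idl.
by move=> u' [E1 E2]; apply: Hu; rewrite -E1 !fcompA H2 fcomp_idl.
Qed.

End Pullbacks.

Arguments pullback_fv_iso {T V W S f P P' r q r' q'} _ _.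

Section Summands.
Variable T : Cat.

Definition summand {V : Ob T} (X S : FV T V) :=
  exists m : FHom (fvobj X) (fvobj S),
    [/\ fcomp (fvmap S) m = fvmap X, forall x, is_iso (projT2 (m x))
      & injective (fun x => projT1 (m x))].

Definition restrict {V : Ob T} (S : FV T V) (p : pred (fidx (fvobj S))) : FV T V :=
  {| fvobj := {| fidx := ({x | p x} : finType); fob := fun x => fob (fvobj S) (val x) |};
     fvmap := fun x => fvmap S (val x) |}.

Lemma orbmap_over {V : Ob T} {X S : FV T V} {m : FHom (fvobj X) (fvobj S)} :
  fcomp (fvmap S) m = fvmap X ->
  forall x, orbmap X x = ccomp (orbmap S (projT1 (m x))) (projT2 (m x)).
Proof.
move=> Hm x; have := f_equal (fun F => F x) Hm; rewrite /= fcompE !fvmapE /=.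
by move/existT_unit_eq; rewrite /orbmap => <-.
Qed.

Lemma orbitwise_iso_monic {A B C : FObj T} (m : FHom B C) (a b : FHom A B) :
  injective (fun x => projT1 (m x)) -> (forall x, is_iso (projT2 (m x))) ->
  fcomp m a = fcomp m b -> a = b.
Proof.
move=> Hinj Hiso E; apply: fhom_ext => i; have := f_equal (fun F => F i) E.
rewrite !fcompE; case: (a i) => j h; case: (b i) => j' h' /= E'.
have ej : j = j' by apply: Hinj; exact: (f_equal (@projT1 _ _) E').
by subst j'; have /(iso_cancel (Hiso j)) -> := inj_pair2 _ _ _ _ _ E'.
Qed.

Definition castH {A : FObj T} {i j : fidx A} (E : i = j) : Hom (fob A i) (fob A j) :=
  match E in _ = j0 return Hom (fob A i) (fob A j0) with erefl => cid _ end.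

Lemma castHE {A : FObj T} {i j : fidx A} (E : i = j) :
  existT (fun k => Hom (fob A i) (fob A k)) j (castH E) = existT _ i (cid _).
Proof. by case: j / E. Qed.

Lemma summand_bij_iso {V : Ob T} (X S : FV T V) (m : FHom (fvobj X) (fvobj S)) :
  fcomp (fvmap S) m = fvmap X -> (forall x, is_iso (projT2 (m x))) ->
  bijective (fun x => projT1 (m x)) -> fv_iso X S.
Proof.
move=> Hm Hiso [t mt tm].
pose psi : FHom (fvobj S) (fvobj X) :=
  fun y => existT _ (t y) (ccomp (iso_inv (Hiso (t y))) (castH (esym (tm y)))).
have H2 : fcomp m psi = fid _.
  by apply: fhom_ext => y; rewrite fcompE /= ccompA iso_invR ccomp_idl castHE.
exists m, psi; split=> //.
apply: (@orbitwise_iso_monic _ _ _ m) => //; first exact: can_inj mt.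
by rewrite fcompA H2 fcomp_idl fcomp_idr.
Qed.

Lemma fv_iso_summand {V : Ob T} (X S : FV T V) : fv_iso X S -> summand X S.
Proof.
case=> phi [psi [H1 H2 H3]]; exists phi; split=> //; last first.
  move=> x y /= E; have K z : projT1 (psi (projT1 (phi z))) = z.
    by rewrite -[z in RHS](f_equal (fun F => projT1 (F z)) H1) fcompE.
  by rewrite -(K x) E K.
move=> i; case Ephi: (phi i) => [j h] /=.
have := f_equal (fun F => F i) H1; rewrite /= fcompE Ephi /=.
case Epsi: (psi j) => [i' h'] /= E1.
have ei : i' = i := f_equal (@projT1 _ _) E1; subst i'.
exists h'; split; first exact: inj_pair2 E1.
by have := f_equal (fun F => F j) H2; rewrite /= fcompE Epsi /= Ephi /=; apply: inj_pair2.
Qed.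

Lemma summand_trans {V : Ob T} (X Y S : FV T V) : summand X Y -> summand Y S -> summand X S.
Proof.
case=> m [M1 M2 M3] [m' [M1' M2' M3']]; exists (fcomp m' m); split.
- by rewrite fcompA M1'.
- by move=> x; rewrite fcompE; apply: is_iso_comp.
- by move=> x y; rewrite /= !fcompE /= => /M3' /M3.
Qed.

Lemma summand_restrict {V : Ob T} (S : FV T V) p : summand (restrict S p) S.
Proof.
exists ((fun x => existT _ (val x) (cid _)) : FHom (fvobj (restrict S p)) (fvobj S)); split.
- by apply: fhom_to_rep_ext => x; rewrite fcompE /= ccomp_idr.
- by move=> x; apply: is_iso_id.
- exact: val_inj.
Qed.

Lemma summand_inl {V : Ob T} (S S' : FV T V) : summand S (sumV S S').
Proof.
exists ((fun x => existT _ (inl x) (cid _)) : FHom (fvobj S) (fvobj (sumV S S'))); split.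
- by apply: fhom_to_rep_ext => x; rewrite fcompE /= ccomp_idr.
- by move=> x; apply: is_iso_id.
- by move=> x y [].
Qed.

Lemma summand_inr {V : Ob T} (S S' : FV T V) : summand S' (sumV S S').
Proof.
exists ((fun x => existT _ (inr x) (cid _)) : FHom (fvobj S') (fvobj (sumV S S'))); split.
- by apply: fhom_to_rep_ext => x; rewrite fcompE /= ccomp_idr.
- by move=> x; apply: is_iso_id.
- by move=> x y [].
Qed.

Lemma summand_empty {V : Ob T} (S : FV T V) : summand (emptyV V) S.
Proof.
exists ((fun x => match x with end) : FHom (fvobj (emptyV V)) (fvobj S)).
by split; [apply: fhom_ext | |]; case.
Qed.

Lemma summand_card {V : Ob T} (X S : FV T V) :
  summand X S -> #|fidx (fvobj X)| <= #|fidx (fvobj S)|.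
Proof. by case=> m [_ _ /leq_card]. Qed.

Lemma fv_iso_card {V : Ob T} (S S' : FV T V) :
  fv_iso S S' -> #|fidx (fvobj S)| = #|fidx (fvobj S')|.
Proof.
move=> H; apply/eqP; rewrite eqn_leq; apply/andP.
by split; apply: summand_card; apply: fv_iso_summand; last apply: fv_iso_sym.
Qed.

End Summands.

Arguments summand {T V} X S.
Arguments restrict {T V} S p.

Section Coproducts.
Variable T : Cat.

Definition coprod_proj {V : Ob T} {S : FV T V} (T_ : forall i, FV T (orb S i)) :
  FHom (fvobj (coprodV T_)) (fvobj S) :=
  fun x => existT _ (tag x) (orbmap (T_ (tag x)) (tagged x)).
Arguments coprod_proj {V S} T_ _.

Lemma orbmap_coprod {V : Ob T} {S : FV T V} (T_ : forall i, FV T (orb S i)) x :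
  orbmap (coprodV T_) x = ccomp (orbmap S (tag x)) (orbmap (T_ (tag x)) (tagged x)).
Proof. by case: x => i k; rewrite /orbmap /= fcompE. Qed.

Lemma coprod_proj_over {V : Ob T} {S : FV T V} (T_ : forall i, FV T (orb S i)) :
  fvmap (coprodV T_) = fcomp (fvmap S) (coprod_proj T_).
Proof. by apply: fhom_to_rep_ext => x; have := orbmap_coprod x; rewrite /orbmap fcompE => ->. Qed.

Lemma summand_coprod {V : Ob T} {S : FV T V} (T_ : forall i, FV T (orb S i)) (X : FV T V) :
  summand X (coprodV T_) ->
  exists (p0 : pred (fidx (fvobj S)))
         (p : forall i : fidx (fvobj (restrict S p0)), pred (fidx (fvobj (T_ (val i))))),
    fv_iso X (coprodV (fun i : fidx (fvobj (restrict S p0)) => restrict (T_ (val i)) (p i))).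
Proof.
case=> m [M1 M2 M3]; set sg := fun x => projT1 (m x).
pose p0 i := [exists x, tag (sg x) == i].
pose p (i : fidx (fvobj (restrict S p0))) k := [exists x, sg x == existT _ (val i) k].
exists p0, p.
pose R (i : fidx (fvobj (restrict S p0))) := restrict (T_ (val i)) (p i).
have P0 x : p0 (tag (sg x)) by apply/existsP; exists x.
have P x : p (exist _ (tag (sg x)) (P0 x)) (tagged (sg x)).
  by apply/existsP; exists x => /=; case: (sg x).
pose m' : FHom (fvobj X) (fvobj (coprodV R)) :=
  fun x => existT _ (existT _ (exist _ (tag (sg x)) (P0 x)) (exist _ (tagged (sg x)) (P x)))
                    (projT2 (m x)).
apply: (@summand_bij_iso _ _ _ (coprodV R) m') => //.
  by rewrite -M1; apply: fhom_ext => x; rewrite !fcompE.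
pose flat (z : {i : fidx (fvobj (restrict S p0)) & fidx (fvobj (R i))}) :=
  existT (fun i => fidx (fvobj (T_ i))) (val (tag z)) (val (tagged z)).
have flat_inj : injective flat.
  move=> [[i1 H1] [k1 K1]] [[i2 H2] [k2 K2]] /= E.
  have ei : i1 = i2 := f_equal (@projT1 _ _) E; subst i2.
  have ek := inj_pair2 _ _ _ _ _ E; simpl in ek; subst k2.
  by rewrite (bool_irrelevance H1 H2) (bool_irrelevance K1 K2).
have flat_m' x : flat (projT1 (m' x)) = sg x by rewrite /flat /=; case: (sg x).
apply: inj_card_bij.
  by move=> x y /(f_equal flat); rewrite !flat_m' => /M3.
have hit z : exists x, sg x == flat z by apply/existsP; exact: valP (tagged z).
have witK z : sg (xchoose (hit z)) = flat z by apply/eqP; exact: xchooseP (hit z).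
by apply: (leq_card (fun z => xchoose (hit z))) => z z' E; apply: flat_inj; rewrite -!witK E.
Qed.

Lemma coprod_color {V : Ob T} (S : FV T V) n (c : fidx (fvobj S) -> 'I_n) :
  fv_iso S (@coprodV _ _ (nstarV n V) (fun i => restrict S (fun x => c x == i))).
Proof.
set R := @coprodV _ _ (nstarV n V) _.
pose m : FHom (fvobj S) (fvobj R) :=
  fun x => existT _ (existT _ (c x) (exist _ x (eqxx (c x)))) (cid _).
apply: (@summand_bij_iso _ _ _ R m).
- by apply: fhom_to_rep_ext => x; rewrite fcompE /= fcompE /= ccomp_idl ccomp_idr.
- by move=> x; apply: is_iso_id.
- exists (fun z : fidx (fvobj R) => val (tagged z)) => // -[i [x H]] /=.
  by have E := eqP H; subst i; rewrite (bool_irrelevance H (eqxx _)).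
Qed.

End Coproducts.

Arguments coprod_proj {T V S} T_ _.

Section Isotrivial.
Variable T : Cat.

Definition isotrivial {V : Ob T} (S : FV T V) := forall i, is_iso (orbmap S i).

Lemma summand_isotrivial {V : Ob T} (X S : FV T V) :
  summand X S -> isotrivial S -> isotrivial X.
Proof.
by case=> m [M1 M2 _] HS x; rewrite (orbmap_over M1); apply: is_iso_comp; [apply: HS | apply: M2].
Qed.

Lemma isotrivial_nstar n (V : Ob T) : isotrivial (nstarV n V).
Proof. by move=> i; apply: is_iso_id. Qed.

Lemma isotrivial_star (V : Ob T) : isotrivial (starV V).
Proof. by move=> i; apply: is_iso_id. Qed.

Lemma isotrivial_empty (V : Ob T) : isotrivial (emptyV V).
Proof. by case. Qed.

Lemma isotrivial_coprod {V : Ob T} {S : FV T V} (T_ : forall i, FV T (orb S i)) :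
  isotrivial S -> (forall i, isotrivial (T_ i)) -> isotrivial (coprodV T_).
Proof. by move=> HS HT x; rewrite orbmap_coprod; apply: is_iso_comp; [apply: HS | apply: HT]. Qed.

Lemma isotrivial_fv_iso {V : Ob T} (S S' : FV T V) :
  isotrivial S -> isotrivial S' -> #|fidx (fvobj S)| = #|fidx (fvobj S')| -> fv_iso S S'.
Proof.
move=> HS HS' E.
pose e i := enum_val (cast_ord E (enum_rank i)).
have e_inj : injective e.
  by move=> i j /enum_val_inj /cast_ord_inj /enum_rank_inj.
pose m : FHom (fvobj S) (fvobj S') :=
  fun i => existT _ (e i) (ccomp (iso_inv (HS' (e i))) (orbmap S i)).
apply: (@summand_bij_iso _ _ _ S' m).
- by apply: fhom_to_rep_ext => i; rewrite fcompE /= ccompA iso_invR ccomp_idl.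
- by move=> i; apply: is_iso_comp; [apply: is_iso_inv | apply: HS].
- by apply: inj_card_bij; rewrite ?E.
Qed.

Lemma nstar_pullback n {V W : Ob T} (f : Hom W V) :
  is_pullback (fvmap (nstarV n V)) (repmap f)
    ((fun i => existT _ i f) : FHom (fvobj (nstarV n W)) (fvobj (nstarV n V)))
    (fvmap (nstarV n W)).
Proof.
apply: is_pullback_rep.
- by apply: fhom_to_rep_ext => i; rewrite !fcompE /= ccomp_idl ccomp_idr.
- move=> X x1 x2 Hx.
  exists (fun _ => existT _ (projT1 (x1 tt)) (projT2 (x2 tt))); split; apply: fhom_rep_ext.
  + have := f_equal (fun F => F tt) Hx; rewrite !fcompE /= ccomp_idl.
    by case: (x1 tt) => i h /= /existT_unit_eq ->; case: (x2 tt) => -[].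
  + by rewrite fcompE /= ccomp_idl; case: (x2 tt) => -[].
- move=> X u u' E1 E2; apply: fhom_rep_ext.
  have := f_equal (fun F => F tt) E2; have := f_equal (fun F => F tt) E1.
  rewrite !fcompE /=; case: (u tt) => i h; case: (u' tt) => i' h' /= Ei.
  have ei : i = i' := f_equal (@projT1 _ _) Ei; subst i'.
  by rewrite !ccomp_idl => /existT_unit_eq ->.
Qed.

Lemma pullback_isotrivial {V W : Ob T} (S : FV T V) (f : Hom W V) {P : FObj T}
    (r : FHom P (fvobj S)) (q : FHom P (rep W)) :
  isotrivial S -> is_pullback (fvmap S) (repmap f) r q ->
  fv_iso {| fvobj := P; fvmap := q |} (nstarV #|fidx (fvobj S)| W).
Proof.
move=> HS Hpb.
have Hn : fv_iso (nstarV #|fidx (fvobj S)| V) S.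
  by apply: isotrivial_fv_iso; rewrite ?card_ord //; apply: isotrivial_nstar.
case: (pullback_along_iso Hn Hpb) => r' Hpb'.
exact: pullback_fv_iso Hpb' (nstar_pullback _ f).
Qed.

End Isotrivial.

Arguments isotrivial {T V} S.
Arguments isotrivial_nstar {T} n V _.
Arguments isotrivial_star {T} V _.
Arguments isotrivial_empty {T} V _.

Section Unital.
Variable T : Cat.

Lemma unital_wis_intro (C : Cls T) :
  (forall V (X S : FV T V), summand X S -> C V S -> C V X) ->
  (forall (U V : Ob T) (f : Hom U V) (S : FV T V) (P : FObj T)
          (q : FHom P (rep U)) (r : FHom P (fvobj S)),
      is_pullback (fvmap S) (repmap f) r q -> C V S -> C U {| fvobj := P; fvmap := q |}) ->
  (forall V, C V (starV V)) ->
  (forall V (S : FV T V) (T_ : forall i, FV T (orb S i)),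
      C V S -> (forall i, C (orb S i) (T_ i)) -> C V (coprodV T_)) ->
  unital_wis C.
Proof.
move=> Hsub Hres Hstar Hcop; split; first split.
- split=> // V S S' /fv_iso_sym /fv_iso_summand; exact: Hsub.
- by move=> V _; apply: Hstar.
- exact: Hcop.
- by move=> V; exists (starV V).
- by move=> V S S' H; split; apply: Hsub H; [apply: summand_inl | apply: summand_inr].
Qed.

Variable C : Cls T.
Arguments C : clear implicits.
Hypothesis HC : unital_wis C.

Lemma unital_iso {V : Ob T} (S S' : FV T V) : fv_iso S S' -> C V S -> C V S'.
Proof. by case: HC => [[[Hiso _] _ _] _ _]; apply: Hiso. Qed.

Lemma unital_res {U V : Ob T} {f : Hom U V} {S : FV T V} {P : FObj T}
    {q : FHom P (rep U)} {r : FHom P (fvobj S)} :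
  is_pullback (fvmap S) (repmap f) r q -> C V S -> C U {| fvobj := P; fvmap := q |}.
Proof. by case: HC => [[[_ Hres] _ _] _ _]; apply: Hres. Qed.

Lemma unital_coprod {V : Ob T} (S : FV T V) (T_ : forall i, FV T (orb S i)) :
  C V S -> (forall i, C (orb S i) (T_ i)) -> C V (coprodV T_).
Proof. by case: HC => [[_ _ Hcop] _ _]; apply: Hcop. Qed.

Lemma unital_star (V : Ob T) : C V (starV V).
Proof. by case: HC => [[_ Hst _] Hne _]; apply: Hst; apply: Hne. Qed.

Lemma unital_summand {V : Ob T} (X S : FV T V) : summand X S -> C V S -> C V X.
Proof.
case=> m [M1 M2 M3] HS; set sg := fun x => projT1 (m x).
pose Y := restrict S (fun s => s \notin codom sg).
pose m2 : FHom (fvobj (sumV X Y)) (fvobj S) :=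
  fun z => match z with inl x => m x | inr y => existT _ (val y) (cid _) end.
suff /fv_iso_sym /unital_iso /(_ HS) : fv_iso (sumV X Y) S.
  by case: HC => [_ _ Hsum] /Hsum [].
apply: (@summand_bij_iso _ _ _ S m2).
- apply: fhom_ext => -[x|y] /=; first exact: (f_equal (fun F => F x) M1).
  by rewrite fcompE /= ccomp_idr; case: (fvmap S (val y)).
- by case=> [x|y] /=; [apply: M2 | apply: is_iso_id].
- apply: inj_card_bij.
    move=> [x1|[y1 Hy1]] [x2|[y2 Hy2]] //= E.
    + by rewrite (M3 _ _ E).
    + by case/negP: Hy2; rewrite -E; apply: codom_f.
    + by case/negP: Hy1; rewrite E; apply: codom_f.
    + by subst y2; rewrite (bool_irrelevance Hy1 Hy2).
  rewrite /= card_sum card_sig -(card_codom M3) -(cardC (mem (codom sg))).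
  by apply: eq_leq; congr (_ + _); apply: eq_card.
Qed.

Lemma unital_empty (V : Ob T) : C V (emptyV V).
Proof. exact: unital_summand (summand_empty _) (unital_star V). Qed.

Lemma unital_isotrivial_small {V : Ob T} (S : FV T V) :
  isotrivial S -> #|fidx (fvobj S)| <= 1 -> C V S.
Proof.
move=> HS; rewrite leq_eqVlt ltnS leqn0 => /orP[] /eqP E.
- apply: unital_iso (unital_star V).
  by apply: isotrivial_fv_iso (isotrivial_star V) HS _; rewrite E card_unit.
- apply: unital_iso (unital_empty V).
  by apply: isotrivial_fv_iso (isotrivial_empty V) HS _; rewrite E card_void.
Qed.

Lemma unital_isotrivial {V : Ob T} (S : FV T V) :
  C V (nstarV 2 V) -> isotrivial S -> C V S.
Proof.
move=> H2; move: {2}#|_| (leqnn #|fidx (fvobj S)|) => n.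
elim: n S => [|n IH] S Hn HS.
  by apply: unital_isotrivial_small => //; apply: leq_trans Hn _.
have [|/card_gt1P [a [b [_ _ Hab]]]] := leqP #|fidx (fvobj S)| 1.
  exact: unital_isotrivial_small.
pose c x : 'I_2 := if x == a then ord0 else ord_max.
apply: unital_iso (fv_iso_sym (coprod_color S c)) _.
apply: unital_coprod H2 _ => i.
apply: IH; last by apply: summand_isotrivial HS; apply: summand_restrict.
have [y Hy] : exists y, c y != i.
  case: (eqVneq i ord0) => [->|Hi]; last by exists a; rewrite /c eqxx eq_sym.
  by exists b; rewrite /c [b == a]eq_sym (negbTE Hab).
rewrite -ltnS; apply: leq_trans Hn.
rewrite /= card_sig -(cardC [pred x | c x == i]) -[X in X < _]addn0 ltn_add2l.
by apply/card_gt0P; exists y.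
Qed.

End Unital.

Lemma nabla_u_family (T : Cat) (C : Cls T) :
  orbital T -> unital_wis C -> is_family (nabla_u C).
Proof.
move=> HorbT HC V W f; rewrite /nabla_u => H2.
case: (HorbT _ _ _ (fvmap (nstarV 2 W)) (repmap f)) => P [r [q Hpb]].
apply: (unital_iso HC) (unital_res HC Hpb H2).
by have := pullback_isotrivial (isotrivial_nstar 2 W) Hpb; rewrite card_ord.
Qed.

Section LeftAdjoint.
Variable T : Cat.

Definition Ladj (F : Ob T -> Prop) : Cls T :=
  fun V S => isotrivial S /\ (#|fidx (fvobj S)| <= 1 \/ F V).
Arguments Ladj F V S : clear implicits.

Lemma cls_ext (C D : Cls T) : (forall V S, C V S <-> D V S) -> C = D.
Proof.
move=> H; apply: functional_extensionality_dep => V; apply: functional_extensionality => S.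
exact: propositional_extensionality.
Qed.

Lemma Ladj_union (F : Ob T -> Prop) : cls_union (@F0 T) (EFinf F) = Ladj F.
Proof.
apply: cls_ext => V S; split.
- case=> [[H|H]|[FV [n H]]].
  + by split; [apply: summand_isotrivial (fv_iso_summand H) (isotrivial_empty V) |
               left; rewrite (fv_iso_card H) card_void].
  + by split; [apply: summand_isotrivial (fv_iso_summand H) (isotrivial_star V) |
               left; rewrite (fv_iso_card H) card_unit].
  + by split; [apply: summand_isotrivial (fv_iso_summand H) (isotrivial_nstar n V) | right].
- case=> HS [|FV].
  + rewrite leq_eqVlt ltnS leqn0 => /orP[] /eqP E; left; [right | left].
    * by apply: isotrivial_fv_iso HS (isotrivial_star V) _; rewrite E card_unit.
    * by apply: isotrivial_fv_iso HS (isotrivial_empty V) _; rewrite E card_void.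
  + right; split=> //; exists #|fidx (fvobj S)|.
    by apply: isotrivial_fv_iso HS (isotrivial_nstar _ V) _; rewrite card_ord.
Qed.

Lemma family_iso (F : Ob T -> Prop) {a b : Ob T} (h : Hom a b) :
  is_family F -> is_iso h -> F a -> F b.
Proof. by move=> HF [g _]; apply: HF g. Qed.

Lemma Ladj_unital (F : Ob T -> Prop) : is_family F -> unital_wis (Ladj F).
Proof.
move=> HF; apply: unital_wis_intro.
- move=> V X S HXS [HS Hc]; split; first exact: summand_isotrivial HXS HS.
  by case: Hc => [Hc|]; [left; apply: leq_trans Hc; apply: summand_card | right].
- move=> U V f S P q r Hpb [HS Hc].
  have HP := pullback_isotrivial HS Hpb; split.
    exact: summand_isotrivial (fv_iso_summand HP) (isotrivial_nstar _ U).
  by case: Hc => [Hc|/(HF _ _ f)]; [left; rewrite (fv_iso_card HP) card_ord | right].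
- by move=> V; split; [apply: isotrivial_star | left; rewrite card_unit].
- move=> V S T_ [HS Hc] HT; split; first by apply: isotrivial_coprod => // i; case: (HT i).
  case: (classic (F V)) => [|nFV]; [by right | left].
  case: Hc => [/fintype_le1P HS1|//]; apply/fintype_le1P => -[i k] [j l] /=.
  case: j / (HS1 j i) in l *.
  case: (HT i) => _ [/fintype_le1P HT1|Fi]; first by rewrite (HT1 k l).
  by case: nFV; apply: family_iso (HS i) Fi.
Qed.

Lemma Ladj_nstar2 (F : Ob T -> Prop) V : Ladj F V (nstarV 2 V) <-> F V.
Proof.
split; last by move=> FV; split; [apply: isotrivial_nstar | right].
by case=> _ [|//]; rewrite card_ord.
Qed.

Lemma Ladj_adjunction (F : Ob T -> Prop) (C : Cls T) :
  unital_wis C -> (cls_le (Ladj F) C <-> fam_le F (nabla_u C)).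
Proof.
move=> HC; split=> [H V /Ladj_nstar2 /H //|H V S [HS [Hc|/H FV]]].
  exact: unital_isotrivial_small.
exact: unital_isotrivial.
Qed.

Lemma Ladj_ff (F F' : Ob T -> Prop) : cls_le (Ladj F) (Ladj F') -> fam_le F F'.
Proof. by move=> H V /Ladj_nstar2 /H /Ladj_nstar2. Qed.

End LeftAdjoint.

Arguments Ladj {T} F V S.

Section RightAdjoint.
Variable T : Cat.

Definition Radj (F : Ob T -> Prop) : Cls T := fun V S =>
  forall W (f : Hom W V) (l1 l2 : FHom (rep W) (fvobj S)),
    fcomp (fvmap S) l1 = repmap f -> fcomp (fvmap S) l2 = repmap f -> l1 <> l2 -> F W.
Arguments Radj F V S : clear implicits.

Lemma lift_star_unique {V W : Ob T} (f : Hom W V) (l1 l2 : FHom (rep W) (fvobj (starV V))) :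
  fcomp (fvmap (starV V)) l1 = repmap f -> fcomp (fvmap (starV V)) l2 = repmap f -> l1 = l2.
Proof. by rewrite /= !fcomp_idl => -> ->. Qed.

Lemma Radj_unital (F : Ob T -> Prop) : unital_wis (Radj F).
Proof.
apply: unital_wis_intro.
- move=> V X S [m [M1 M2 M3]] HS W f l1 l2 E1 E2 Ne.
  apply: (HS W f (fcomp m l1) (fcomp m l2)); rewrite ?fcompA ?M1 //.
  by move/(orbitwise_iso_monic M3 M2).
- move=> U V g S P q r [Hc HU] HS W h l1 l2 E1 E2 Ne.
  have over l : fcomp q l = repmap h -> fcomp (fvmap S) (fcomp r l) = repmap (ccomp g h).
    by move=> El; rewrite fcompA Hc -fcompA El repmap_comp.
  apply: (HS W (ccomp g h) (fcomp r l1) (fcomp r l2) (over _ E1) (over _ E2)) => E.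
  by apply: Ne; apply: (pullback_monic (conj Hc HU)); rewrite // E1 E2.
- by move=> V W f l1 l2 E1 E2 []; apply: lift_star_unique E1 E2.
- move=> V S T_ HS HT W f l1 l2 E1 E2 Ne.
  rewrite coprod_proj_over -fcompA in E1; rewrite coprod_proj_over -fcompA in E2.
  have [Em|] := classic (fcomp (coprod_proj T_) l1 = fcomp (coprod_proj T_) l2).
    2: exact: HS _ _ _ _ E1 E2.
  have := f_equal (fun F => F tt) Em; rewrite !fcompE /=.
  case El1: (l1 tt) => [[i k] h]; case El2: (l2 tt) => [[j k'] h'] /= Eij.
  have eij : i = j := f_equal (@projT1 _ _) Eij; subst j.
  apply: (HT i W _ (fun _ => existT _ k h) (fun _ => existT _ k' h')).
  + by apply: fhom_rep_ext; rewrite fcompE fvmapE.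
  + by apply: fhom_rep_ext; rewrite fcompE fvmapE /= -(inj_pair2 _ _ _ _ _ Eij).
  + move=> /(f_equal (fun F => F tt)) /= Ekk; apply: Ne; apply: fhom_rep_ext.
    have ekk : k = k' := f_equal (@projT1 _ _) Ekk; subst k'.
    by rewrite El1 El2 (inj_pair2 _ _ _ _ _ Ekk).
Qed.

Lemma Radj_nstar2 (F : Ob T -> Prop) V : Radj F V (nstarV 2 V) -> F V.
Proof.
move/(_ V (cid V) (fun _ => existT _ ord0 (cid V)) (fun _ => existT _ ord_max (cid V))).
apply=> [||/(f_equal (fun F => val (projT1 (F tt))))//]; apply: fhom_rep_ext.
  by rewrite fcompE /= ccomp_idl.
by rewrite fcompE /= ccomp_idl.
Qed.

Lemma Radj_ff (F F' : Ob T -> Prop) : is_family F -> cls_le (Radj F) (Radj F') -> fam_le F F'.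
Proof. by move=> HF H V FV; apply: Radj_nstar2; apply: H => W f *; apply: HF f FV. Qed.

Lemma Ladj_le_Radj (F : Ob T -> Prop) : is_family F -> cls_le (Ladj F) (Radj F).
Proof.
move=> HF V S [HS [/fintype_le1P HS1|FV]] W f l1 l2 E1 E2 Ne; last exact: HF f FV.
case: Ne; apply: fhom_rep_ext.
move: E1 E2 => /(f_equal (fun F => F tt)) + /(f_equal (fun F => F tt)).
rewrite !fcompE; case: (l1 tt) => i h; case: (l2 tt) => j h'; case: j / (HS1 j i) in h' *.
rewrite !fvmapE /= => /existT_unit_eq E1 /existT_unit_eq E2.
by rewrite (iso_cancel (HS i) (etrans E1 (esym E2))).
Qed.

Hypothesis HatT : atomic T.

Lemma section_orbit_iso {W : Ob T} (P : FV T W) (u : FHom (rep W) (fvobj P)) :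
  fcomp (fvmap P) u = fid (rep W) ->
  is_iso (orbmap P (projT1 (u tt))) /\ ccomp (orbmap P (projT1 (u tt))) (projT2 (u tt)) = cid W.
Proof.
move/(f_equal (fun F => F tt)); rewrite fcompE fvmapE /= => /existT_unit_eq Eu.
by split=> //; apply: HatT; exists (projT2 (u tt)).
Qed.

Lemma distinct_sections_nstar2 {W : Ob T} (P : FV T W) (u1 u2 : FHom (rep W) (fvobj P)) :
  fcomp (fvmap P) u1 = fid (rep W) -> fcomp (fvmap P) u2 = fid (rep W) -> u1 <> u2 ->
  exists p, fv_iso (restrict P p) (nstarV 2 W).
Proof.
move=> /section_orbit_iso + /section_orbit_iso + Nu.
case Eu1: (u1 tt) => [a1 h1] [/= I1 E1]; case Eu2: (u2 tt) => [a2 h2] [/= I2 E2].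
have Na : a1 != a2.
  apply/eqP => Ea; subst a2; apply: Nu; apply: fhom_rep_ext.
  by rewrite Eu1 Eu2 (iso_cancel I1 (etrans E1 (esym E2))).
exists (fun x => (x == a1) || (x == a2)).
apply: isotrivial_fv_iso (isotrivial_nstar 2 W) _.
  by case=> x Hx; have : is_iso (orbmap P x) by case/orP: Hx => /eqP ->.
rewrite /= card_sig card_ord -[RHS]/(true.+1) -Na -card2.
by apply: eq_card.
Qed.

Hypothesis HorbT : orbital T.

Lemma unital_le_Radj (C : Cls T) (F : Ob T -> Prop) :
  unital_wis C -> fam_le (nabla_u C) F -> cls_le C (Radj F).
Proof.
move=> HC HCF V S HS W f l1 l2 E1 E2 Ne; apply: HCF.
case: (HorbT (fvmap S) (repmap f)) => P [r [q Hpb]].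
pose PW : FV T W := {| fvobj := P; fvmap := q |}.
have lift l : fcomp (fvmap S) l = repmap f ->
    exists2 u, fcomp r u = l & fcomp (fvmap PW) u = fid (rep W).
  move=> El; case: Hpb => _ /(_ _ l (fid _)) [|u [[Hr Hq] _]]; last by exists u.
  by rewrite fcomp_idr.
case: (lift _ E1) => u1 R1 Q1; case: (lift _ E2) => u2 R2 Q2.
have [p Hp] : exists p, fv_iso (restrict PW p) (nstarV 2 W).
  by apply: (distinct_sections_nstar2 PW Q1 Q2) => E; apply: Ne; rewrite -R1 -R2 E.
apply: (unital_iso HC Hp); apply: (unital_summand HC (summand_restrict _ _)).
exact: (unital_res HC Hpb HS).
Qed.

Lemma Radj_adjunction (C : Cls T) (F : Ob T -> Prop) :
  unital_wis C -> (fam_le (nabla_u C) F <-> cls_le C (Radj F)).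
Proof.
move=> HC; split; first exact: unital_le_Radj.
by move=> H V /H /Radj_nstar2.
Qed.

End RightAdjoint.

Arguments Radj {T} F V S.

Lemma existT_nestedE {I : Type} {J : I -> Type} {P : {i : I & J i} -> Type} i k1 k2 m1 m2 :
  existT P (existT J i k1) m1 = existT P (existT J i k2) m2 <->
  existT (fun k => P (existT J i k)) k1 m1 = existT (fun k => P (existT J i k)) k2 m2.
Proof.
split=> [E|E]; last exact: (f_equal (fun s => existT P (existT J i (projT1 s)) (projT2 s)) E).
have ek := inj_pair2 _ _ _ _ _ (f_equal (@projT1 _ _) E); subst k2.
by rewrite (inj_pair2 _ _ _ _ _ E).
Qed.

Section PullbackCoprod.
Variable T : Cat.
Variables (V W : Ob T) (S : FV T V) (T_ : forall i, FV T (orb S i)) (f : Hom W V).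
Variables (Q : FObj T) (r : FHom Q (fvobj S)) (q : FHom Q (rep W)).
Hypothesis HQ : is_pullback (fvmap S) (repmap f) r q.
Variables (Pb : fidx Q -> FObj T)
  (rb : forall b, FHom (Pb b) (fvobj (T_ (projT1 (r b)))))
  (qb : forall b, FHom (Pb b) (rep (fob Q b))).
Hypothesis HPb : forall b,
  is_pullback (fvmap (T_ (projT1 (r b)))) (repmap (projT2 (r b))) (rb b) (qb b).

Definition pb_base : FV T W := {| fvobj := Q; fvmap := q |}.
Definition pb_fibre (b : fidx (fvobj pb_base)) : FV T (orb pb_base b) :=
  {| fvobj := Pb b; fvmap := qb b |}.
Definition pb_coprod_map : FHom (fvobj (coprodV pb_fibre)) (fvobj (coprodV T_)) :=
  fun z => existT _ (existT _ (projT1 (r (tag z))) (projT1 (rb (tag z) (tagged z))))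
                    (projT2 (rb (tag z) (tagged z))).

Lemma pb_coprod_square :
  fcomp (coprod_proj T_) pb_coprod_map = fcomp r (coprod_proj pb_fibre).
Proof.
apply: fhom_ext => -[b c]; rewrite !fcompE /=; congr (existT _ _ _).
have := f_equal (fun F => F c) (proj1 (HPb b)); rewrite !fcompE fvmapE /=.
by move/existT_unit_eq; rewrite /orbmap fvmapE.
Qed.

Lemma pb_coprod_comm :
  fcomp (fvmap (coprodV T_)) pb_coprod_map = fcomp (repmap f) (fvmap (coprodV pb_fibre)).
Proof.
by rewrite !coprod_proj_over -!fcompA pb_coprod_square !fcompA (proj1 HQ).
Qed.

Lemma pb_coprod_monic X (u u' : FHom (rep X) (fvobj (coprodV pb_fibre))) :
  fcomp pb_coprod_map u = fcomp pb_coprod_map u' ->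
  fcomp (fvmap (coprodV pb_fibre)) u = fcomp (fvmap (coprodV pb_fibre)) u' -> u = u'.
Proof.
move=> E1 E2.
have Eb : fcomp (coprod_proj pb_fibre) u = fcomp (coprod_proj pb_fibre) u'.
  apply: (pullback_monic HQ); first by rewrite !fcompA -pb_coprod_square -!fcompA E1.
  by rewrite !fcompA -(coprod_proj_over pb_fibre).
apply: fhom_rep_ext; move: E1 E2 Eb.
move=> /(f_equal (fun F => F tt)) + /(f_equal (fun F => F tt)) + /(f_equal (fun F => F tt)).
rewrite !fcompE; case: (u tt) => -[b c] h; case: (u' tt) => -[b' c'] h' /= E1 E2 Eb.
have eb : b = b' := f_equal (@projT1 _ _) Eb; subst b'.
have Ev : ((fun _ => existT _ c h) : FHom (rep X) (Pb b)) = (fun _ => existT _ c' h').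
  apply: (pullback_monic (HPb b)); apply: fhom_rep_ext; rewrite !fcompE /=.
    by move/existT_nestedE: E1.
  by apply/existT_unit_eq; exact: inj_pair2 _ _ _ _ _ Eb.
move/(f_equal (fun F => F tt)): Ev => /= Ecc.
have ec : c = c' := f_equal (@projT1 _ _) Ecc; subst c'.
by rewrite (inj_pair2 _ _ _ _ _ Ecc).
Qed.

Lemma pb_coprod_lift X (x1 : FHom (rep X) (fvobj (coprodV T_))) (x2 : FHom (rep X) (rep W)) :
  fcomp (fvmap (coprodV T_)) x1 = fcomp (repmap f) x2 ->
  exists u, fcomp pb_coprod_map u = x1 /\ fcomp (fvmap (coprodV pb_fibre)) u = x2.
Proof.
move=> Hx.
have Hy : fcomp (fvmap S) (fcomp (coprod_proj T_) x1) = fcomp (repmap f) x2.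
  by rewrite fcompA -coprod_proj_over.
case: (proj2 HQ _ _ _ Hy) => w [[W1 W2] _].
case Ex: (x1 tt) => [[i k] h]; case Ew: (w tt) => [b hb].
have Ey := f_equal (fun F => F tt) W1; rewrite !fcompE Ex Ew /= in Ey.
have ei : projT1 (r b) = i := f_equal (@projT1 _ _) Ey; subst i.
pose z1 : FHom (rep X) (fvobj (T_ (projT1 (r b)))) := fun _ => existT _ k h.
pose z2 : FHom (rep X) (rep (fob Q b)) := fun _ => existT _ tt hb.
have Hz : fcomp (fvmap (T_ (projT1 (r b)))) z1 = fcomp (repmap (projT2 (r b))) z2.
  apply: fhom_rep_ext; rewrite !fcompE fvmapE /=; apply/existT_unit_eq.
  by rewrite (inj_pair2 _ _ _ _ _ Ey).
case: (proj2 (HPb b) _ _ _ Hz) => v [[V1 V2] _].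
case Ev: (v tt) => [c hc].
exists (fun _ => existT _ (existT _ b c) hc); split.
- apply: fhom_rep_ext; rewrite fcompE Ex /=; apply/existT_nestedE.
  by have := f_equal (fun F => F tt) V1; rewrite fcompE Ev.
- rewrite coprod_proj_over -W2 -fcompA; congr fcomp; apply: fhom_rep_ext.
  rewrite fcompE Ew /=; congr (existT _ _ _).
  by have := f_equal (fun F => F tt) V2; rewrite fcompE Ev /= => /existT_unit_eq.
Qed.

Lemma pullback_coprod :
  is_pullback (fvmap (coprodV T_)) (repmap f) pb_coprod_map (fvmap (coprodV pb_fibre)).
Proof.
apply: is_pullback_rep; [exact: pb_coprod_comm | exact: pb_coprod_lift | exact: pb_coprod_monic].
Qed.

End PullbackCoprod.

Arguments pullback_coprod {T V W S T_ f Q r q} HQ {Pb rb qb} HPb.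

Lemma pullback_sig (T : Cat) : orbital T ->
  forall (A B C : FObj T) (f : FHom A C) (g : FHom B C),
  {P : FObj T & {p1 : FHom P A & {p2 : FHom P B | is_pullback f g p1 p2}}}.
Proof.
move=> HorbT A B C f g.
case/constructive_indefinite_description: (HorbT A B C f g) => P.
case/constructive_indefinite_description => p1 /constructive_indefinite_description [p2 H].
by exists P, p1, p2.
Qed.

Section Join.
Variable T : Cat.
Hypothesis HorbT : orbital T.
Variables (C : Cls T) (F : Ob T -> Prop).
Arguments C : clear implicits.
Hypothesis HC : unital_wis C.
Hypothesis HF : is_family F.

Unset Implicit Arguments.
Inductive join_gen : forall V : Ob T, FV T V -> Prop :=
| join_gen_C V S : C V S -> join_gen V S
| join_gen_L V S : Ladj F V S -> join_gen V S
| join_gen_iso V S S' : join_gen V S -> fv_iso S S' -> join_gen V S'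
| join_gen_coprod V S (T_ : forall i, FV T (orb S i)) :
    join_gen V S -> (forall i, join_gen (orb S i) (T_ i)) -> join_gen V (coprodV T_).
Set Implicit Arguments.

Lemma join_gen_summand V (S : FV T V) : join_gen V S -> forall X, summand X S -> join_gen V X.
Proof.
elim=> {V S} [V S HS X HX|V S HS X HX|V S S' _ IH H X HX|V S T_ _ IHS _ IHT X HX].
- by apply: join_gen_C; exact: (unital_summand HC HX HS).
- by apply: join_gen_L; exact: (unital_summand (Ladj_unital HF) HX HS).
- by apply: IH; apply: summand_trans HX _; apply: fv_iso_summand; apply: fv_iso_sym.
- case: (summand_coprod HX) => p0 [p Hiso].
  apply: join_gen_iso (fv_iso_sym Hiso); apply: join_gen_coprod.
    by apply: IHS; apply: summand_restrict.
  by move=> i; apply: IHT; apply: summand_restrict.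
Qed.

Lemma join_gen_res V (S : FV T V) : join_gen V S ->
  forall U (f : Hom U V) (P : FObj T) (q : FHom P (rep U)) (r : FHom P (fvobj S)),
    is_pullback (fvmap S) (repmap f) r q -> join_gen U {| fvobj := P; fvmap := q |}.
Proof.
elim=> {V S} [V S HS|V S HS|V S S' _ IH H|V S T_ _ IHS _ IHT] U f P q r Hpb.
- by apply: join_gen_C; exact: (unital_res HC Hpb HS).
- by apply: join_gen_L; exact: (unital_res (Ladj_unital HF) Hpb HS).
- by case: (pullback_along_iso H Hpb) => r' /IH.
- case: (HorbT (fvmap S) (repmap f)) => Q [r' [q' HQ]].
  pose pb b := pullback_sig HorbT (fvmap (T_ (projT1 (r' b)))) (repmap (projT2 (r' b))).
  have HPb b := proj2_sig (projT2 (projT2 (pb b))).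
  have Hcop := pullback_coprod HQ HPb.
  apply: join_gen_iso (pullback_fv_iso Hcop Hpb); apply: join_gen_coprod.
    exact: IHS HQ.
  by move=> b; apply: IHT (HPb b).
Qed.

Lemma join_gen_unital : unital_wis join_gen.
Proof.
apply: unital_wis_intro.
- by move=> V X S HXS HS; apply: join_gen_summand HS _ HXS.
- by move=> U V f S P q r Hpb HS; apply: join_gen_res HS _ _ _ _ _ Hpb.
- by move=> V; apply: join_gen_C; apply: unital_star.
- exact: join_gen_coprod.
Qed.

Lemma wis_joinE V (S : FV T V) : wis_join C (EFinf F) V S <-> join_gen V S.
Proof.
split=> [|].
- apply; first by case: join_gen_unital.
    by move=> W X; apply: join_gen_C.
  by move=> W X HX; apply: join_gen_L; rewrite -Ladj_union; right.
- elim=> {V S} [V S HS|V S HS|V S S' _ IH H|V S T_ _ IHS _ IHT] W HW HCW HEW.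
  + exact: HCW.
  + have [[Hiso _] _ _] := HW.
    move: HS; rewrite -Ladj_union => -[[HS|HS]|]; last exact: HEW.
      by apply: Hiso (fv_iso_sym HS) _; apply: HCW; apply: unital_empty.
    by apply: Hiso (fv_iso_sym HS) _; apply: HCW; apply: unital_star.
  + by have [[Hiso _] _ _] := HW; apply: Hiso H _; apply: IH.
  + have [_ _ Hcop] := HW; apply: Hcop; first exact: IHS.
    by move=> i; apply: IHT.
Qed.

End Join.

Lemma join_transport (T : Cat) (F F' : Ob T -> Prop) (C : Cls T) :
  orbital T -> atomic T -> is_family F' -> fam_le F F' ->
  unital_wis C -> (forall V, nabla_u C V <-> F V) ->
  [/\ unital_wis (wis_join C (EFinf F')),
      (forall V, nabla_u (wis_join C (EFinf F')) V <-> F' V)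
    & forall D : Cls T, unital_wis D -> fam_le F' (nabla_u D) ->
        (cls_le C D <-> cls_le (wis_join C (EFinf F')) D)].
Proof.
move=> HorbT HatT HF' HFF' HC HnC.
have EL : cls_le (EFinf F') (Ladj F') by move=> V S HS; rewrite -Ladj_union; right.
split.
- rewrite (_ : wis_join C (EFinf F') = join_gen T C F'); first exact: join_gen_unital.
  by apply: cls_ext => V S; apply: wis_joinE.
- move=> V; split=> [H2|HV W _ _]; last by apply; split=> //; exists 2; apply: fv_iso_refl.
  apply: Radj_nstar2; apply: H2.
  + by case: (@Radj_unital T F').
  + by apply: unital_le_Radj => // U /HnC /HFF'.
  + by move=> U X /EL; apply: Ladj_le_Radj.
- move=> D HD HFD; split=> [HCD V S HS|HtD V S HS]; last by apply: HtD => W _ HCW _; apply: HCW.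
  apply: HS => //; first by case: HD.
  by move=> U X /EL; apply: (proj2 (Ladj_adjunction F' HD) HFD).
Qed.

Theorem mainTheorem18 (T : Cat) (HorbT : orbital T) (HatT : atomic T) :
  (* nabla_u restricts to a map wIndSys^uni -> Fam *)
  (forall C : Cls T, unital_wis C -> is_family (nabla_u C)) /\
  (* left adjoint L(F) = F^0 u E_F F^infty_F *)
  ((forall F, is_family F -> unital_wis (cls_union (@F0 T) (EFinf F))) /\
   (forall F (C : Cls T), is_family F -> unital_wis C ->
      (cls_le (cls_union (@F0 T) (EFinf F)) C <-> fam_le F (nabla_u C))) /\
   (forall F F', is_family F -> is_family F' ->
      cls_le (cls_union (@F0 T) (EFinf F)) (cls_union (@F0 T) (EFinf F')) ->
      fam_le F F')) /\
  (* fully faithful right adjoint *)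
  (exists R : (Ob T -> Prop) -> Cls T,
     (forall F, is_family F -> unital_wis (R F)) /\
     (forall (C : Cls T) F, unital_wis C -> is_family F ->
        (fam_le (nabla_u C) F <-> cls_le C (R F))) /\
     (forall F F', is_family F -> is_family F' -> cls_le (R F) (R F') -> fam_le F F')) /\
  (* cocartesian fibration with transport C |-> C v E_F' F^infty_F' *)
  (forall F F' (C : Cls T), is_family F -> is_family F' -> fam_le F F' ->
     unital_wis C -> (forall V, nabla_u C V <-> F V) ->
     let t := wis_join C (EFinf F') in
     [/\ unital_wis t,
         (forall V, nabla_u t V <-> F' V)
       & forall D : Cls T, unital_wis D -> fam_le F' (nabla_u D) ->
           (cls_le C D <-> cls_le t D)]).
Proof.
split; first by move=> C; apply: nabla_u_family.
split.
  split; first by move=> F HF; rewrite Ladj_union; apply: Ladj_unital.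
  by split=> [F C _ HC|F F' _ _]; rewrite !Ladj_union; [apply: Ladj_adjunction | apply: Ladj_ff].
split; last by move=> F F' C _ HF' HFF' HC HnC; exact: (join_transport HorbT HatT HF' HFF' HC HnC).
exists Radj; split; first by move=> F _; apply: Radj_unital.
split=> [C F HC _|F F' HF _]; [exact: Radj_adjunction | exact: Radj_ff].
Qed.
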